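(* Let $\mathcal{C}$ be a Conway category and let $\mathbf{Q}$ be a finite automaton such that the identity $\Gamma(\mathbf{Q})$ holds in $\mathcal{C}$. Then for every extension $\mathbf{Q}'$ of $\mathbf{Q}$, the identity $\Gamma(\mathbf{Q}')$ holds in $\mathcal{C}$.
   Context: Cartesian categories have chosen finite products (terminal object $T$, projections $\pi_i$, tupling $\langle\cdot\rangle$, $!_A:A\to T$, $f\times g$), strictly associative; composition is written $g\circ f$; $\Delta_{A^n}=\langle 1_A,\ldots,1_A\rangle:A\to A^n$. A dagger operation maps $f:A\times C\to A$ to $f^\dagger:C\to A$. A Conway category is a cartesian category with dagger satisfying: $(f\circ(1_A\times g))^\dagger=f^\dagger\circ g$ ($f:A\times B\to A$, $g:C\to B$); $f^{\dagger\dagger}=(f\circ(\Delta_{A^2}\times 1_C))^\dagger$ ($f:A\times A\times C\to A$); $(f\circ\langle g,\pi_2^{A\times C}\rangle)^\dagger=f\circ\langle (g\circ\langle f,\pi_2^{B\times C}\rangle)^\dagger,1_C\rangle$ ($f:B\times C\to A$, $g:A\times C\to B$). A finite automaton $\mathbf{Q}=(Q,Z,\cdot)$ has finite nonempty state set $Q$, finite nonempty input alphabet $Z$ and action $Q\times Z\to Q$, extended to words; $u^{\mathbf{Q}}:Q\to Q$ denotes $q\mapsto qu$. An automaton $\mathbf{Q}'=(Q,Z',\cdot)$ with the same state set is an extension of $\mathbf{Q}$ if $Z\subseteq Z'$, $a^{\mathbf{Q}'}=a^{\mathbf{Q}}$ for all $a\in Z$, and for each $b\in Z'\setminus Z$ there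 is a word $u\in Z^*$ with $b^{\mathbf{Q}'}=u^{\mathbf{Q}}$. Write $Q=\{q_1,\ldots,q_n\}$, identified with $\{1,\ldots,n\}$, and $Z=\{a_1,\ldots,a_m\}$. For an object $A$ and $i\in[n]$ let $\rho_i^{\mathbf{Q},A}=\langle\pi^{A^n}_{ia_1},\ldots,\pi^{A^n}_{ia_m}\rangle:A^n\to A^m$ ($ia_j$ is the index of $q_i\cdot a_j$). For $f:A^m\times C\to A$ let $f^{\mathbf{Q},A}:A^n\times C\to A^n$ have components $\pi_i^{A^n}\circ f^{\mathbf{Q},A}=f\circ(\rho_i^{\mathbf{Q},A}\times 1_C)$. The identity $\Gamma(\mathbf{Q})$ holds in $\mathcal{C}$ if $(f^{\mathbf{Q},A})^\dagger=\Delta_{A^n}\circ(f\circ(\Delta_{A^m}\times 1_C))^\dagger$ for all objects $A,C$ and all $f:A^m\times C\to A$. *)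

From mathcomp Require Import ssreflect ssrfun ssrbool eqtype ssrnat seq fintype.
Set Implicit Arguments. Unset Strict Implicit. Unset Printing Implicit Defensive.

Record catops := CatOps {
  Ob : Type;
  Hom : Ob -> Ob -> Type;
  comp : forall A B C : Ob, Hom B C -> Hom A B -> Hom A C;  (* comp g f = g o f *)
  idm : forall A : Ob, Hom A A;
  Tm : Ob;
  prod : Ob -> Ob -> Ob;
  pi1 : forall A B : Ob, Hom (prod A B) A;
  pi2 : forall A B : Ob, Hom (prod A B) B;
  pair : forall C A B : Ob, Hom C A -> Hom C B -> Hom C (prod A B);
  bang : forall A : Ob, Hom A Tm;
  dagger : forall A C : Ob, Hom (prod A C) A -> Hom C A
}.

Arguments comp {c A B C} : rename. Arguments idm {c} : rename. Arguments Tm {c} : rename.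
Arguments prod {c} : rename.
Arguments pi1 {c A B} : rename. Arguments pi2 {c A B} : rename. Arguments pair {c C A B} : rename.
Arguments bang {c} : rename. Arguments dagger {c A C} : rename.

Section Ops.
Variable K : catops.

Definition pmor (A B A' B' : Ob K) (f : Hom A A') (g : Hom B B') :
  Hom (prod A B) (prod A' B') := pair (comp f pi1) (comp g pi2).

Definition cartesian : Prop :=
  [/\ ((forall (A B C D : Ob K) (h : Hom C D) (g : Hom B C) (f : Hom A B),
         comp h (comp g f) = comp (comp h g) f) /\
      (forall (A B : Ob K) (f : Hom A B), comp (idm B) f = f)),
      (forall (A B : Ob K) (f : Hom A B), comp f (idm A) = f),
      (forall (C A B : Ob K) (f : Hom C A) (g : Hom C B),
         comp pi1 (pair f g) = f /\ comp pi2 (pair f g) = g),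
      (forall (C A B : Ob K) (h : Hom C (prod A B)), pair (comp pi1 h) (comp pi2 h) = h)
    & (forall (A : Ob K) (f : Hom A Tm), f = bang A)].

Definition conway : Prop :=
  [/\ cartesian,
      (forall (A B C : Ob K) (f : Hom (prod A B) A) (g : Hom C B),
         dagger (comp f (pmor (idm A) g)) = comp (dagger f) g),
      (* double dagger identity; A x A x C is bracketed as A x (A x C) *)
      (forall (A C : Ob K) (f : Hom (prod A (prod A C)) A),
         dagger (dagger f) =
         (* Delta_{A^2} x 1_C = <pi1, <pi1, pi2>> : A x C -> A x (A x C) *)
         dagger (comp f (pair (@pi1 K A C) (pair (@pi1 K A C) (@pi2 K A C)))))
    &
      (forall (A B C : Ob K) (f : Hom (prod B C) A) (g : Hom (prod A C) B),
         dagger (comp f (pair g (@pi2 K A C))) =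
         comp f (pair (dagger (comp g (pair f (@pi2 K B C)))) (idm C)))].

(* A^(k+1), right nested: A^1 = A, A^(k+2) = A x A^(k+1). *)
Fixpoint pow1 (A : Ob K) (k : nat) : Ob K :=
  match k with 0 => A | k'.+1 => prod A (pow1 A k') end.

Unset Implicit Arguments.
Fixpoint proj (A : Ob K) (k : nat) : 'I_k.+1 -> Hom (pow1 A k) A :=
  match k return 'I_k.+1 -> Hom (pow1 A k) A with
  | 0 => fun _ => idm A
  | k'.+1 => fun i => match unlift ord0 i with
                      | None => @pi1 K A (pow1 A k')
                      | Some j => comp (proj A k' j) (@pi2 K A (pow1 A k'))
                      end
  end.

Fixpoint tup (A B : Ob K) (k : nat) : ('I_k.+1 -> Hom B A) -> Hom B (pow1 A k) :=
  match k return ('I_k.+1 -> Hom B A) -> Hom B (pow1 A k) with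
  | 0 => fun fs => fs ord0
  | k'.+1 => fun fs => pair (fs ord0) (tup A B k' (fun j => fs (lift ord0 j)))
  end.

Set Implicit Arguments.
Arguments proj {A k}. Arguments tup {A B k}.
Definition diag (A : Ob K) (k : nat) : Hom A (pow1 A k) := tup (fun _ => idm A).

Section Gamma.
(* A finite automaton with states 'I_n.+1 and letters 'I_m.+1 (i.e. n+1 states,
   m+1 letters, numbered), and action act. *)
Variables (n m : nat) (act : 'I_n.+1 -> 'I_m.+1 -> 'I_n.+1).

Definition rho (A : Ob K) (i : 'I_n.+1) : Hom (pow1 A n) (pow1 A m) :=
  tup (fun j => @proj A n (act i j)).

Definition fQ (A C : Ob K) (f : Hom (prod (pow1 A m) C) A) :
  Hom (prod (pow1 A n) C) (pow1 A n) :=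
  tup (fun i => comp f (pmor (rho A i) (idm C))).

Definition Gamma : Prop :=
  forall (A C : Ob K) (f : Hom (prod (pow1 A m) C) A),
    dagger (fQ f) = comp (diag A n) (dagger (comp f (pmor (diag A m) (idm C)))).
End Gamma.
End Ops.

Definition word_act (n m : nat) (act : 'I_n.+1 -> 'I_m.+1 -> 'I_n.+1)
  (q : 'I_n.+1) (u : seq 'I_m.+1) : 'I_n.+1 := foldl act q u.

(* Q' = (same states, Z', act') is an extension of Q = (states, Z, act), where the
   inclusion Z \subseteq Z' is given by the injection iota. *)
Definition extension (n m m' : nat) (act : 'I_n.+1 -> 'I_m.+1 -> 'I_n.+1)
  (iota : 'I_m.+1 -> 'I_m'.+1) (act' : 'I_n.+1 -> 'I_m'.+1 -> 'I_n.+1) : Prop :=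
  [/\ injective iota,
      (forall (q : 'I_n.+1) (a : 'I_m.+1), act' q (iota a) = act q a)
    & (forall b : 'I_m'.+1, (forall a, iota a != b) ->
         exists u : seq 'I_m.+1, forall q, act' q b = word_act act q u)].

(* If every letter of Q1 acts like some letter of Q2, then Gamma(Q2) implies Gamma(Q1): reindex
   f along the letters.  Gamma also survives adjoining a letter acting as the identity (by the
   double-dagger identity, which decouples the system) and a letter acting as a product xy of two
   letters (double the object A, let the second coordinate of state q record the value at q.y,
   and substitute it away).  Hence, starting from Q, one reaches an automaton satisfying Gamma in
   which every word of Q, in particular every letter of the extension Q', acts as a letter. *)

From mathcomp Require Import ssreflect ssrfun ssrbool eqtype ssrnat seq fintype.

Set Implicit Arguments. Unset Strict Implicit. Unset Printing Implicit Defensive.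

#[local] Arguments proj {K A k}.
#[local] Arguments tup {K A B k}.

Section Cartesian.
Variable K : catops.
Hypothesis HC : cartesian K.

Lemma compA (A B C D : Ob K) (h : Hom C D) (g : Hom B C) (f : Hom A B) :
  comp h (comp g f) = comp (comp h g) f.
Proof. by case: HC => [[]]. Qed.

Lemma compAr (A B C D : Ob K) (h : Hom C D) (g : Hom B C) (f : Hom A B) :
  comp (comp h g) f = comp h (comp g f).
Proof. by rewrite compA. Qed.

Lemma compAE (A B C D : Ob K) (h : Hom C D) (g : Hom B C) (hg : Hom B D) (f : Hom A B) :
  comp h g = hg -> comp h (comp g f) = comp hg f.
Proof. by rewrite compA => ->. Qed.

Lemma comp1l (A B : Ob K) (f : Hom A B) : comp (idm B) f = f.
Proof. by case: HC => [[]]. Qed.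

Lemma comp1r (A B : Ob K) (f : Hom A B) : comp f (idm A) = f.
Proof. by case: HC. Qed.

Lemma pi1_pair (C A B : Ob K) (f : Hom C A) (g : Hom C B) : comp pi1 (pair f g) = f.
Proof. by case: HC => _ _ H _ _; case: (H _ _ _ f g). Qed.

Lemma pi2_pair (C A B : Ob K) (f : Hom C A) (g : Hom C B) : comp pi2 (pair f g) = g.
Proof. by case: HC => _ _ H _ _; case: (H _ _ _ f g). Qed.

Lemma pair_eta (C A B : Ob K) (h : Hom C (prod A B)) : pair (comp pi1 h) (comp pi2 h) = h.
Proof. by case: HC. Qed.

Lemma pair_ext (C A B : Ob K) (h1 h2 : Hom C (prod A B)) :
  comp pi1 h1 = comp pi1 h2 -> comp pi2 h1 = comp pi2 h2 -> h1 = h2.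
Proof. by move=> e1 e2; rewrite -(pair_eta h1) -(pair_eta h2) e1 e2. Qed.

Lemma pair_comp (D C A B : Ob K) (f : Hom C A) (g : Hom C B) (h : Hom D C) :
  comp (pair f g) h = pair (comp f h) (comp g h).
Proof. by apply: pair_ext; rewrite compA ?pi1_pair ?pi2_pair. Qed.

Lemma pair_pi (A B : Ob K) : pair (@pi1 K A B) pi2 = idm _.
Proof. by rewrite -{1}(comp1r pi1) -(comp1r pi2) pair_eta. Qed.

Lemma proj0 (A : Ob K) k : @proj K A k.+1 ord0 = pi1.
Proof. by rewrite /= unlift_none. Qed.

Lemma projS (A : Ob K) k (j : 'I_k.+1) : @proj K A k.+1 (lift ord0 j) = comp (proj j) pi2.
Proof. by rewrite /= liftK. Qed.

Lemma proj_tup (A B : Ob K) k (fs : 'I_k.+1 -> Hom B A) i : comp (proj i) (tup fs) = fs i.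
Proof.
elim: k fs i => [|k IH] fs i.
  by rewrite /= comp1l; congr fs; apply/val_inj; case: i => [[]].
case: (unliftP ord0 i) => [j ->|->]; last by rewrite proj0 /= pi1_pair.
by rewrite projS -compA /= pi2_pair IH.
Qed.

Lemma proj_tup_comp (A B D : Ob K) k (fs : 'I_k.+1 -> Hom B A) (h : Hom D B) i :
  comp (proj i) (comp (tup fs) h) = comp (fs i) h.
Proof. by rewrite compA proj_tup. Qed.

Lemma tup_ext (A B : Ob K) k (h1 h2 : Hom B (pow1 A k)) :
  (forall i, comp (proj i) h1 = comp (proj i) h2) -> h1 = h2.
Proof.
elim: k h1 h2 => [|k IH] h1 h2 H; first by move: (H ord0); rewrite /= !comp1l.
apply: pair_ext; first by move: (H ord0); rewrite proj0.
by apply: IH => j; move: (H (lift ord0 j)); rewrite projS -!compA.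
Qed.

Lemma eq_tup (A B : Ob K) k (fs gs : 'I_k.+1 -> Hom B A) :
  (forall i, fs i = gs i) -> tup fs = tup gs.
Proof. by move=> e; apply: tup_ext => i; rewrite !proj_tup. Qed.

Lemma pmor_comp (A B A' B' A'' B'' : Ob K) (f : Hom A' A'') (g : Hom B' B'')
    (f' : Hom A A') (g' : Hom B B') :
  comp (pmor f g) (pmor f' g') = pmor (comp f f') (comp g g').
Proof. by rewrite /pmor pair_comp -!compA pi1_pair pi2_pair. Qed.

Definition pow_fst (A B : Ob K) k : Hom (pow1 (prod A B) k) (pow1 A k) :=
  tup (fun i => comp pi1 (proj i)).

Definition pow_snd (A B : Ob K) k : Hom (pow1 (prod A B) k) (pow1 B k) :=
  tup (fun i => comp pi2 (proj i)).

Definition pow_pair (A B : Ob K) k : Hom (prod (pow1 A k) (pow1 B k)) (pow1 (prod A B) k) :=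
  tup (fun i => pair (comp (proj i) pi1) (comp (proj i) pi2)).

Lemma pow_fst_pair (A B : Ob K) k : comp (pow_fst A B k) (pow_pair A B k) = pi1.
Proof.
by apply: tup_ext => i; rewrite proj_tup_comp compAr proj_tup pi1_pair.
Qed.

Lemma pow_snd_pair (A B : Ob K) k : comp (pow_snd A B k) (pow_pair A B k) = pi2.
Proof.
by apply: tup_ext => i; rewrite proj_tup_comp compAr proj_tup pi2_pair.
Qed.

Lemma pow_pair_eta (A B : Ob K) k :
  comp (pow_pair A B k) (pair (pow_fst A B k) (pow_snd A B k)) = idm _.
Proof.
apply: tup_ext => i; rewrite proj_tup_comp comp1r pair_comp !compAr.
by rewrite pi1_pair pi2_pair !proj_tup pair_eta.
Qed.

Lemma pow_fst_diag (A B : Ob K) k :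
  comp (pow_fst A B k) (diag (prod A B) k) = comp (diag A k) pi1.
Proof.
by apply: tup_ext => i; rewrite proj_tup_comp compAr !proj_tup proj_tup_comp comp1r comp1l.
Qed.

Lemma pow_fst_rho n m (act : 'I_n.+1 -> 'I_m.+1 -> 'I_n.+1) (A B : Ob K) i :
  comp (pow_fst A B m) (rho act (prod A B) i) = comp (rho act A i) (pow_fst A B n).
Proof.
apply: tup_ext => j.
by rewrite proj_tup_comp compAr !proj_tup proj_tup_comp proj_tup.
Qed.

End Cartesian.

Ltac cat_simpl HC :=
  rewrite /pmor ?(compAr HC, pair_comp HC, pi1_pair HC, pi2_pair HC, comp1l HC,
                  comp1r HC, proj_tup HC, proj_tup_comp HC).

Section Conway.
Variable K : catops.
Hypothesis HK : conway K.

Let HC : cartesian K. Proof. by case: HK. Qed.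

Lemma dagger_param (A B C : Ob K) (f : Hom (prod A B) A) (g : Hom C B) :
  dagger (comp f (pmor (idm A) g)) = comp (dagger f) g.
Proof. by case: HK. Qed.

Lemma dagger_dagger (A C : Ob K) (f : Hom (prod A (prod A C)) A) :
  dagger (dagger f) = dagger (comp f (pair pi1 (pair pi1 pi2))).
Proof. by case: HK. Qed.

Lemma dagger_comp (A B C : Ob K) (f : Hom (prod B C) A) (g : Hom (prod A C) B) :
  dagger (comp f (pair g pi2)) = comp f (pair (dagger (comp g (pair f pi2))) (idm C)).
Proof. by case: HK. Qed.

Lemma dagger_fix (A C : Ob K) (f : Hom (prod A C) A) :
  dagger f = comp f (pair (dagger f) (idm C)).
Proof. by have := dagger_comp f pi1; rewrite (pair_pi HC) (comp1r HC) (pi1_pair HC). Qed.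

Lemma dagger_const (A C : Ob K) (k : Hom C A) : dagger (comp k (@pi2 K A C)) = k.
Proof. by rewrite dagger_fix (compAr HC) (pi2_pair HC) (comp1r HC). Qed.

Lemma dagger_pair_decoupled (A B P : Ob K) (g : Hom (prod A P) A) (h : Hom (prod B P) B) :
  dagger (pair (comp g (pmor (@pi1 K A B) (idm P))) (comp h (pmor pi2 (idm P))))
  = pair (dagger g) (dagger h).
Proof.
set F : Hom (prod B (prod (prod A B) P)) (prod A B) :=
  pair (comp g (pair (comp pi1 (comp pi1 pi2)) (comp pi2 pi2))) (comp h (pair pi1 (comp pi2 pi2))).
set G : Hom (prod (prod A B) (prod (prod A B) P)) B := comp pi2 pi1.
have -> : pair (comp g (pmor (@pi1 K A B) (idm P))) (comp h (pmor pi2 (idm P)))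
          = comp (comp F (pair G pi2)) (pair pi1 (pair pi1 pi2)) by cat_simpl HC.
rewrite -dagger_dagger dagger_comp.
have -> : comp G (pair F pi2) = comp h (pmor (idm B) pi2) by cat_simpl HC.
rewrite dagger_param.
set F2 : Hom (prod A P) (prod A B) := pair g (comp (dagger h) pi2).
have -> : comp F (pair (comp (dagger h) pi2) (idm (prod (prod A B) P)))
          = comp F2 (pair (comp pi1 pi1) pi2).
  by cat_simpl HC; rewrite [in RHS](dagger_fix h); cat_simpl HC.
rewrite dagger_comp.
have -> : comp (comp pi1 pi1) (pair F2 pi2) = g by cat_simpl HC.
by cat_simpl HC; rewrite -dagger_fix.
Qed.

Lemma dagger_tup_decoupled (A P : Ob K) k (gs : 'I_k.+1 -> Hom (prod A P) A) :
  dagger (tup (fun i => comp (gs i) (pmor (proj i) (idm P)))) = tup (fun i => dagger (gs i)).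
Proof.
elim: k gs => [|k IH] gs; first by rewrite /=; cat_simpl HC; rewrite (pair_pi HC) (comp1r HC).
rewrite /= -(IH (fun j => gs (lift ord0 j))) -dagger_pair_decoupled unlift_none.
congr (dagger (pair _ _)); apply: (tup_ext HC) => i.
by rewrite (proj_tup HC) (compA HC) !(proj_tup HC) liftK; cat_simpl HC.
Qed.

(* [mk] inverts [pair top lay], so V = T x L; as the L-part of Phi depends only on the T-part,
   splitting Phi by the double-dagger identity lets the composition identity solve for it. *)
Lemma dagger_subst (V T L C : Ob K) (top : Hom V T) (lay : Hom V L) (mk : Hom (prod T L) V) :
  comp top mk = pi1 -> comp lay mk = pi2 -> comp mk (pair top lay) = idm V ->
  forall (Phi : Hom (prod V C) V) (S : Hom (prod T C) L),
  comp lay Phi = comp S (pmor top (idm C)) ->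
  comp top (dagger Phi) = dagger (comp (comp top Phi) (pair (comp mk (pair pi1 S)) pi2)).
Proof.
move=> e1 e2 e3 Phi S hS.
set H := comp top Phi.
set Phit := comp H (pair (comp mk (pair pi1 S)) pi2).
set G : Hom (prod V (prod V C)) L := comp lay pi1.
set F : Hom (prod L (prod V C)) V :=
  comp mk (pair (comp H (pair (comp mk (pair (comp top (comp pi1 pi2)) pi1)) (comp pi2 pi2)))
                (comp S (pair (comp top (comp pi1 pi2)) (comp pi2 pi2)))).
have mk_top_lay : comp mk (pair (comp top pi1) (comp lay pi1)) = @pi1 _ V C.
  by rewrite -(pair_comp HC) (compA HC) e3 (comp1l HC).
have eP : Phi = comp (comp F (pair G pi2)) (pair pi1 (pair pi1 pi2)).
  rewrite /F /G /H; cat_simpl HC; rewrite mk_top_lay (pair_pi HC) (comp1r HC).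
  have -> : comp S (pair (comp top pi1) pi2) = comp lay Phi by rewrite hS /pmor (comp1l HC).
  by rewrite -(pair_comp HC) (compA HC) e3 (comp1l HC).
set E := comp mk (pair Phit S).
have eF : dagger (comp F (pair G pi2)) = comp E (pair (comp top pi1) pi2).
  rewrite dagger_comp.
  have -> : comp G (pair F pi2) = comp (comp S (pmor top (idm C))) pi2.
    by rewrite /G /F; cat_simpl HC; rewrite (compAE HC _ e2) (pi2_pair HC).
  by rewrite dagger_const /F /E /Phit; cat_simpl HC.
rewrite eP -dagger_dagger eF dagger_comp.
have -> : comp (comp top pi1) (pair E pi2) = Phit.
  by rewrite /E; cat_simpl HC; rewrite (compAE HC _ e1) (pi1_pair HC).
by rewrite [RHS]dagger_fix /E (compAr HC) (compAE HC _ e1) /Phit /H; cat_simpl HC.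
Qed.

End Conway.

Section Transformations.
Variable n : nat.

Definition realizes m (act : 'I_n.+1 -> 'I_m.+1 -> 'I_n.+1) (t : 'I_n.+1 -> 'I_n.+1) :=
  exists b, act^~ b =1 t.

Definition covers m1 m2 (act1 : 'I_n.+1 -> 'I_m1.+1 -> 'I_n.+1)
    (act2 : 'I_n.+1 -> 'I_m2.+1 -> 'I_n.+1) :=
  forall b, realizes act1 (act2^~ b).

Lemma covers_refl m (act : 'I_n.+1 -> 'I_m.+1 -> 'I_n.+1) : covers act act.
Proof. by move=> b; exists b. Qed.

Lemma realizes_covers m1 m2 (act1 : 'I_n.+1 -> 'I_m1.+1 -> 'I_n.+1)
    (act2 : 'I_n.+1 -> 'I_m2.+1 -> 'I_n.+1) t :
  covers act1 act2 -> realizes act2 t -> realizes act1 t.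
Proof. by move=> c12 [b2 e2]; have [b1 e1] := c12 b2; exists b1 => q; rewrite e1 e2. Qed.

Lemma covers_trans m1 m2 m3 (act1 : 'I_n.+1 -> 'I_m1.+1 -> 'I_n.+1)
    (act2 : 'I_n.+1 -> 'I_m2.+1 -> 'I_n.+1) (act3 : 'I_n.+1 -> 'I_m3.+1 -> 'I_n.+1) :
  covers act1 act2 -> covers act2 act3 -> covers act1 act3.
Proof. by move=> c12 c23 b; apply: realizes_covers c12 (c23 b). Qed.

Definition add_letter m (act : 'I_n.+1 -> 'I_m.+1 -> 'I_n.+1) (t : 'I_n.+1 -> 'I_n.+1) :
    'I_n.+1 -> 'I_m.+2 -> 'I_n.+1 :=
  fun q b => if unlift ord0 b is Some j then act q j else t q.

Lemma add_letterS m (act : 'I_n.+1 -> 'I_m.+1 -> 'I_n.+1) t q j :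
  add_letter act t q (lift ord0 j) = act q j.
Proof. by rewrite /add_letter liftK. Qed.

Lemma realizes_add_letter m (act : 'I_n.+1 -> 'I_m.+1 -> 'I_n.+1) t :
  realizes (add_letter act t) t.
Proof. by exists ord0 => q; rewrite /add_letter unlift_none. Qed.

Lemma covers_add_letter m (act : 'I_n.+1 -> 'I_m.+1 -> 'I_n.+1) t :
  covers (add_letter act t) act.
Proof. by move=> b; exists (lift ord0 b) => q; rewrite add_letterS. Qed.

End Transformations.

Section GammaClosure.
Variables (K : catops) (n : nat).
Hypothesis HK : conway K.

Let HC : cartesian K. Proof. by case: HK. Qed.

Lemma Gamma_covered m1 m2 (act1 : 'I_n.+1 -> 'I_m1.+1 -> 'I_n.+1)
    (act2 : 'I_n.+1 -> 'I_m2.+1 -> 'I_n.+1) :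
  covers act2 act1 -> Gamma K act2 -> Gamma K act1.
Proof.
move=> /fin_all_exists [phi Hphi] HG A C f.
set tr : Hom (pow1 A m2) (pow1 A m1) := tup (fun b => proj (phi b)).
have tr_rho i : comp tr (rho act2 A i) = rho act1 A i.
  by apply: (tup_ext HC) => j; rewrite (proj_tup_comp HC) !(proj_tup HC) Hphi.
have tr_diag : comp tr (diag A m2) = diag A m1.
  by apply: (tup_ext HC) => j; rewrite (proj_tup_comp HC) !(proj_tup HC).
have := HG A C (comp f (pmor tr (idm C))).
have -> : fQ act2 (comp f (pmor tr (idm C))) = fQ act1 f.
  by apply: (eq_tup HC) => i; rewrite (compAr HC) (pmor_comp HC) tr_rho (comp1l HC).
by move=> ->; rewrite (compAr HC) (pmor_comp HC) tr_diag (comp1l HC).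
Qed.

Lemma rho_add_letter m (act : 'I_n.+1 -> 'I_m.+1 -> 'I_n.+1) t (A : Ob K) i :
  rho (add_letter act t) A i = pair (proj (t i)) (rho act A i).
Proof.
rewrite /rho /= /add_letter unlift_none; congr pair.
by apply: (eq_tup HC) => j; rewrite liftK.
Qed.

(* The identity letter makes the equation of component [i] read component [i] itself; the
   double-dagger identity turns that reading into a parameter, leaving a decoupled system
   whose inner fixed points form an instance of Gamma(Q). *)
Lemma Gamma_add_id m (act : 'I_n.+1 -> 'I_m.+1 -> 'I_n.+1) :
  Gamma K act -> Gamma K (add_letter act id).
Proof.
move=> HG A C f.
set g : Hom (prod A (prod (pow1 A m) C)) A :=
  comp f (pair (pair pi1 (comp pi1 pi2)) (comp pi2 pi2)).
set H : Hom (prod (pow1 A n) (prod (pow1 A n) C)) (pow1 A n) :=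
  tup (fun i => comp (comp g (pmor (idm A) (pmor (rho act A i) (idm C)))) (pmor (proj i) (idm _))).
have eH : fQ (add_letter act id) f = comp H (pair pi1 (pair pi1 pi2)).
  apply: (tup_ext HC) => i.
  by rewrite (proj_tup HC) /H (proj_tup_comp HC) rho_add_letter /g; cat_simpl HC.
have dH : dagger H = fQ act (dagger g).
  by rewrite /H (dagger_tup_decoupled HK); apply: (eq_tup HC) => i; rewrite (dagger_param HK).
rewrite eH -(dagger_dagger HK) dH HG -(dagger_param HK) (dagger_dagger HK).
by congr (comp _ (dagger _)); rewrite /g /diag /=; cat_simpl HC.
Qed.

(* Double A: component [i] carries a pair (a_i, b_i) with b_i = a_(i.y), so that
   b_(i.x) = a_(i.xy); eliminating the b's by [dagger_subst] yields the composite letter. *)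
Lemma Gamma_add_comp m (act : 'I_n.+1 -> 'I_m.+1 -> 'I_n.+1) (x y : 'I_m.+1) :
  Gamma K act -> Gamma K (add_letter act (fun q => act (act q x) y)).
Proof.
move=> HG A C f.
set top := pow_fst A A n; set lay := pow_snd A A n; set mk := pow_pair A A n.
set f' : Hom (prod (pow1 (prod A A) m) C) (prod A A) :=
  pair (comp f (pair (pair (comp pi2 (comp (proj x) pi1)) (comp (pow_fst A A m) pi1)) pi2))
       (comp pi1 (comp (proj y) pi1)).
set S : Hom (prod (pow1 A n) C) (pow1 A n) := tup (fun i => comp (proj (act i y)) pi1).
have e1 : comp top mk = pi1 := pow_fst_pair HC A A n.
have hS : comp lay (fQ act f') = comp S (pmor top (idm C)).
  by apply: (tup_ext HC) => i; rewrite /lay /pow_snd /S /fQ /f'; cat_simpl HC.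
have eQ : comp (comp top (fQ act f')) (pair (comp mk (pair pi1 S)) pi2)
          = fQ (add_letter act (fun q => act (act q x) y)) f.
  apply: (tup_ext HC) => i.
  rewrite /fQ (proj_tup HC) rho_add_letter /f'; cat_simpl HC.
  by rewrite (compAE HC _ (pow_fst_rho HC act A A i)) (compAr HC) (compAE HC _ e1) (pi1_pair HC).
set Phid := comp f' (pmor (diag (prod A A) m) (idm C)).
have hSd : comp pi2 Phid = comp (@pi1 K A C) (pmor pi1 (idm C)) by rewrite /Phid /f'; cat_simpl HC.
have eQd : comp (comp pi1 Phid) (pair (comp (idm (prod A A)) (pair pi1 pi1)) pi2)
           = comp f (pmor (diag A m.+1) (idm C)).
  rewrite /Phid /f' [diag A m.+1]/diag /=; cat_simpl HC.
  by rewrite (compAE HC _ (pow_fst_diag HC A A m)); cat_simpl HC.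
rewrite -eQ -(dagger_subst HK e1 (pow_snd_pair HC A A n) (pow_pair_eta HC A A n) hS).
rewrite (HG (prod A A) C f') (compA HC) (pow_fst_diag HC) -(compA HC).
have id_pair : comp (idm (prod A A)) (pair pi1 pi2) = idm _ by rewrite (comp1l HC) (pair_pi HC).
by rewrite (dagger_subst HK (comp1r HC pi1) (comp1r HC pi2) id_pair hSd) eQd.
Qed.

Lemma Gamma_realize_word m (act : 'I_n.+1 -> 'I_m.+1 -> 'I_n.+1) (u : seq 'I_m.+1)
    m1 (act1 : 'I_n.+1 -> 'I_m1.+1 -> 'I_n.+1) :
  Gamma K act1 -> covers act1 act ->
  exists m2 (act2 : 'I_n.+1 -> 'I_m2.+1 -> 'I_n.+1),
    [/\ Gamma K act2, covers act2 act1 & realizes act2 (word_act act ^~ u)].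
Proof.
elim/last_ind: u m1 act1 => [|u a IH] m1 act1 G1 c1.
  exists m1.+1, (add_letter act1 id); split; last exact: realizes_add_letter.
    exact: Gamma_add_id.
  exact: covers_add_letter.
have [m2 [act2 [G2 c21 [b eb]]]] := IH m1 act1 G1 c1.
have [a' ea'] := covers_trans c21 c1 a.
exists m2.+1, (add_letter act2 (fun q => act2 (act2 q b) a')); split.
- exact: Gamma_add_comp.
- exact: covers_trans (covers_add_letter _ _) c21.
- have [b' eb'] := realizes_add_letter act2 (fun q => act2 (act2 q b) a').
  by exists b' => q; rewrite eb' ea' eb /word_act foldl_rcons.
Qed.

Lemma Gamma_realize_letters m (act : 'I_n.+1 -> 'I_m.+1 -> 'I_n.+1)
    m' (act' : 'I_n.+1 -> 'I_m'.+1 -> 'I_n.+1) (s : seq 'I_m'.+1) :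
  Gamma K act -> (forall b, exists u, act'^~ b =1 word_act act ^~ u) ->
  exists m2 (act2 : 'I_n.+1 -> 'I_m2.+1 -> 'I_n.+1),
    [/\ Gamma K act2, covers act2 act & {in s, forall b, realizes act2 (act'^~ b)}].
Proof.
move=> HG words; elim: s => [|b s [m2 [act2 [G2 c2 r2]]]].
  by exists m, act; split=> //; apply: covers_refl.
have [u eu] := words b.
have [m3 [act3 [G3 c32 [b3 eb3]]]] := Gamma_realize_word u G2 c2.
exists m3, act3; split=> //; first exact: covers_trans c32 c2.
move=> c; rewrite inE => /predU1P [-> | /r2 rc]; last exact: realizes_covers c32 rc.
by exists b3 => q; rewrite eb3 eu.
Qed.

End GammaClosure.

Lemma extension_words n m m' (act : 'I_n.+1 -> 'I_m.+1 -> 'I_n.+1) (iota : 'I_m.+1 -> 'I_m'.+1)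
    (act' : 'I_n.+1 -> 'I_m'.+1 -> 'I_n.+1) :
  extension act iota act' -> forall b, exists u, act'^~ b =1 word_act act ^~ u.
Proof.
case=> _ act'_iota act'_new b.
have [/existsP [a /eqP <-] | old] := boolP [exists a, iota a == b].
  by exists [:: a] => q; rewrite act'_iota.
by apply: act'_new => a; apply: contraNneq old => <-; apply/existsP; exists a.
Qed.

Theorem lemma4p1 (K : catops) (HK : conway K)
  (n m : nat) (act : 'I_n.+1 -> 'I_m.+1 -> 'I_n.+1)
  (HG : Gamma K act)
  (m' : nat) (iota : 'I_m.+1 -> 'I_m'.+1) (act' : 'I_n.+1 -> 'I_m'.+1 -> 'I_n.+1)
  (Hext : extension act iota act') :
  Gamma K act'.
Proof.
have [m2 [act2 [G2 _ r2]]] :=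
  Gamma_realize_letters HK (enum 'I_m'.+1) HG (extension_words Hext).
by apply: (Gamma_covered HK _ G2) => b; apply: r2; rewrite mem_enum.
Qed.
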